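(* Let $s,k$ be positive integers with $s\leq\tfrac15 k$ and let $\vec s=(s,\dots,s)\in\mathbb{Z}_+^k$. Then \[ \mathrm{LCS}_2(4,\mathcal P_{\vec s})\leq(2s^2k)^{1/3}+\tfrac53 s+s^{4/3}k^{-1/3}. \]
   Context: For $\vec s\in\mathbb{Z}_+^k$, an $\vec s$-multipermutation is a word over $\{1,\dots,k\}$ in which each letter $l$ appears exactly $s_l$ times; $\mathcal P_{\vec s}$ is the set of all of them. $\mathrm{LCS}(w,w')$ is the length of a longest common subsequence of words $w,w'$. $\mathrm{LCS}_2(t,\mathcal P_{\vec s})$ is the minimum, over all sets of $t$ distinct elements of $\mathcal P_{\vec s}$, of the maximum $\mathrm{LCS}$ of two distinct members of the set. *)

From mathcomp Require Import all_boot.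
From Stdlib Require Import Reals.
Set Implicit Arguments. Unset Strict Implicit. Unset Printing Implicit Defensive.

Definition is_multiperm (s : seq nat) (w : seq nat) : Prop :=
  all (fun a => (1 <= a) && (a <= size s)) w /\
  forall l, 1 <= l <= size s -> count_mem l w = nth 0 s l.-1.

Fixpoint all_masks (n : nat) : seq bitseq :=
  if n is n'.+1 then
    [seq true :: m | m <- all_masks n'] ++ [seq false :: m | m <- all_masks n']
  else [:: [::]].

Definition LCS (w w' : seq nat) : nat :=
  \max_(c <- [seq mask m w | m <- all_masks (size w)] | subseq c w') size c.

From mathcomp Require Import all_boot all_order zify.
From Stdlib Require Import Reals Lra.
From Stdlib Require ZArith.
Set Implicit Arguments. Unset Strict Implicit. Unset Printing Implicit Defensive.

(* Cut the letters 1..k into lines of l consecutive letters and group the lines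
   into blocks of b lines, at most a blocks in all.  Four words are built from
   these blocks: 1^s 2^s ... k^s, the same word with every block reversed, and
   two words that run through the blocks downwards and, inside a block, sweep
   every line s times, in opposite row orders and opposite column directions.
   A common subsequence of two of these words is monotone for both orders, and
   each pair of orders pins it down: to a single letter per block (length at
   most a s), to a single line per row class meeting each sweep at most once
   (b s), to a single line read monotonically across the sweeps (s - 1 + l), or
   to a single line per block read in two opposite sweep patterns (a (2s - 1)).
   With T = floor (cbrt (2 s^2 k)) + floor (5 s / 3), the choice a = T / (2s - 1),
   b = T / s, l = T - s + 1 keeps all four bounds at most T while a b l >= k. *)

(** * Longest common subsequences *)

Lemma mem_all_masks (m : bitseq) : m \in all_masks (size m).
Proof. by elim: m => [|[] m IH] /=; rewrite ?inE // mem_cat map_f ?orbT. Qed.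

Lemma LCS_le_common w w' T :
  (forall c, subseq c w -> subseq c w' -> size c <= T) -> LCS w w' <= T.
Proof.
move=> common; apply/bigmax_leqP_seq => _ /mapP[m _ ->].
exact/common/mask_subseq.
Qed.

Lemma leq_LCS c w w' : subseq c w -> subseq c w' -> size c <= LCS w w'.
Proof.
case/subseqP => m size_m -> c_w'; rewrite /LCS.
apply: (@leq_bigmax_seq _ _ _ _ (mask m w)) => //.
by apply/mapP; exists m; rewrite // -size_m mem_all_masks.
Qed.

Lemma LCSC w w' : LCS w w' = LCS w' w.
Proof.
by apply/eqP; rewrite eqn_leq !LCS_le_common // => c c_w c_w'; apply: leq_LCS.
Qed.

Lemma uniq_LCS_pairwise T W :
  pairwise (fun w w' => LCS w w' <= T) W -> all (fun w => T < size w) W ->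
  uniq W /\ {in W &, forall w w', w != w' -> LCS w w' <= T}.
Proof.
move=> W_LCS W_size; split.
  rewrite uniq_pairwise; apply: (sub_in_pairwise (P := mem W)) W_LCS => //.
  move=> w w' w_in _ /= LCS_le; apply: contraTneq LCS_le => <-; rewrite -ltnNge.
  have := @leq_LCS w w w (subseq_refl w) (subseq_refl w).
  by have := allP W_size w w_in; rewrite /=; lia.
elim: W W_LCS {W_size} => [|x W IH] //= /andP[/allP x_LCS /IH W_LCS].
move=> w w'; rewrite !inE => /orP[/eqP->|w_in] /orP[/eqP->|w'_in]; rewrite ?eqxx //.
- by move=> _; apply: x_LCS.
- by move=> _; rewrite LCSC; apply: x_LCS.
- exact: W_LCS.
Qed.

(** * Descents *)

Fixpoint descents_from (T : Type) (lt : rel T) (x : T) (s : seq T) : nat :=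
  if s is y :: s' then ~~ lt x y + descents_from lt y s' else 0.

Definition descents (T : Type) (lt : rel T) (s : seq T) : nat :=
  if s is x :: s' then descents_from lt x s' else 0.

Lemma descents_map (T T' : Type) (f : T -> T') (lt : rel T') s :
  descents lt (map f s) = descents (relpre f lt) s.
Proof. by case: s => [|x s] //=; elim: s x => [|y s IH] x //=; rewrite IH. Qed.

Lemma descents_eq0 (T : Type) (lt : rel T) s : sorted lt s -> descents lt s = 0.
Proof.
by case: s => [|x s] //=; elim: s x => [|y s IH] x //= /andP[-> /IH].
Qed.

Lemma descents_from_cons (T : Type) (lt : rel T) x y s :
  transitive lt -> descents_from lt x s <= ~~ lt x y + descents_from lt y s.
Proof.
move=> lt_tr; case: s => [|z s] //=.
case lxy: (lt x y); case lyz: (lt y z); case lxz: (lt x z) => //=; try lia.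
by rewrite (lt_tr _ _ _ lxy lyz) in lxz.
Qed.

Lemma descents_from_subseq (T : eqType) (lt : rel T) x c w :
  transitive lt -> subseq c w -> descents_from lt x c <= descents_from lt x w.
Proof.
move=> lt_tr; elim: w c x => [|y w IH] [|z c] x //= c_w.
case: eqP c_w => [<-|_] c_w; first by rewrite leq_add2l; apply: IH.
exact: leq_trans (IH _ _ c_w) (descents_from_cons _ _ _ lt_tr).
Qed.

Lemma descents_subseq (T : eqType) (lt : rel T) c w :
  transitive lt -> subseq c w -> descents lt c <= descents lt w.
Proof.
move=> lt_tr; elim: w c => [|y w IH] [|z c] //= c_w.
case: eqP c_w => [<-|_] c_w; first exact: descents_from_subseq.
apply: leq_trans (IH _ c_w) _; case: w {IH c_w} => [|x w] //=; exact: leq_addl.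
Qed.

Lemma size_le_descents (T : Type) (lt1 lt2 : rel T) s :
  (forall u v, ~~ (lt1 u v && lt2 u v)) ->
  size s <= (descents lt1 s + descents lt2 s).+1.
Proof.
move=> lt12; case: s => [|x s] //=; elim: s x => [|y s IH] x //=.
by have := IH y; have := lt12 x y; case: (lt1 x y); case: (lt2 x y) => //= _; lia.
Qed.

Lemma leq_rank_last (T : Type) (rank : T -> nat) x s :
  path (relpre rank leq) x s -> rank x <= rank (last x s).
Proof.
by elim: s x => [|y s IH] x //= /andP[/leq_trans le_xy /IH /le_xy].
Qed.

(* In a sequence sorted by rank and then by [lt], every descent of [lt] is a strict
   rise of the rank. *)
Lemma descents_lex (T : eqType) (rank : T -> nat) (lt : rel T) S s :
  sorted (fun x y => (rank x < rank y) || (rank x == rank y) && lt x y) s ->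
  all (fun x => rank x < S) s -> descents lt s <= S.-1.
Proof.
case: s => [|x s] // s_lex /allP s_lt /=.
have /leq_trans -> // : descents_from lt x s <= rank (last x s) - rank x.
  elim: s x s_lex {s_lt} => [|y s IH] x //= /andP[lex_xy s_lex].
  have lex_le u v : (rank u < rank v) || (rank u == rank v) && lt u v -> rank u <= rank v.
    by case/orP => [/ltnW|/andP[/eqP-> _]].
  have := IH y s_lex; have := leq_rank_last (sub_path lex_le s_lex).
  by move: lex_xy; case: (lt x y); rewrite /= ?andbF ?orbF; lia.
have := s_lt _ (mem_last x s); lia.
Qed.

Lemma size_le_descents_range (T : eqType) (g : T -> nat) N s :
  sorted (relpre g leq) s -> all (fun x => g x < N) s ->
  size s <= descents (relpre g ltn) s + N.
Proof.
case: s => [|x s] // s_le s_lt.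
have N_gt0 : 0 < N by case/andP: s_lt; lia.
have rises : descents (fun x y => g y <= g x) (x :: s) <= N.-1.
  by apply: descents_lex s_lt; apply: sub_sorted s_le => y z /=; lia.
have disj u v : ~~ (relpre g ltn u v && (g v <= g u)) by rewrite /=; lia.
have := @size_le_descents _ (relpre g ltn) (fun x y => g y <= g x) (x :: s) disj; lia.
Qed.

(* On every line, [w] is a concatenation of at most [s] runs along which [g] increases. *)
Definition runs_on_lines (s : nat) (line g : nat -> nat) (w : seq nat) :=
  forall L, descents (relpre g ltn) [seq v <- w | line v == L] <= s.-1.

Section Lines.
Variables (s : nat) (line g : nat -> nat) (w : seq nat).
Hypothesis w_runs : runs_on_lines s line g w.

Lemma descents_on_line (c : seq nat) :
  subseq c w -> pairwise (fun u v => line u == line v) c ->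
  descents (relpre g ltn) c <= s.-1.
Proof.
case: c => [|u c] // c_w; rewrite pairwise_cons => /andP[same_line _].
apply: leq_trans (w_runs (line u)).
apply: descents_subseq; first by move=> ? ? ?; apply: ltn_trans.
rewrite subseq_filter c_w andbT /= eqxx.
by apply/allP => v /(allP same_line); rewrite eq_sym.
Qed.

Hypothesis s_gt0 : 0 < s.

Lemma size_line_antitone (c : seq nat) :
  subseq c w -> pairwise (fun u v => (line u == line v) && (g v <= g u)) c ->
  size c <= s.
Proof.
move=> c_w c_pw.
have disj u v : ~~ (relpre g ltn u v && (g v <= g u)) by rewrite /=; lia.
have := @size_le_descents _ (relpre g ltn) (fun u v => g v <= g u) c disj.
have -> : descents (fun u v => g v <= g u) c = 0.
  by apply/descents_eq0/pairwise_sorted/(sub_pairwise _ c_pw) => u v /andP[].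
have same_line : pairwise (fun u v => line u == line v) c.
  by apply: sub_pairwise c_pw => u v /andP[].
have := descents_on_line c_w same_line.
lia.
Qed.

Lemma size_line_monotone N (c : seq nat) :
  subseq c w -> all (fun v => g v < N) c ->
  pairwise (fun u v => (line u == line v) && (g u <= g v)) c -> size c <= s.-1 + N.
Proof.
move=> c_w c_lt c_pw.
apply: leq_trans (size_le_descents_range _ c_lt) _.
  by apply/pairwise_sorted/(sub_pairwise _ c_pw) => u v /andP[].
by rewrite leq_add2r descents_on_line // (sub_pairwise _ c_pw) // => u v /andP[].
Qed.

End Lines.

Lemma size_line_opposite s line g g' w w' (c : seq nat) :
  runs_on_lines s line g w -> runs_on_lines s line g' w' ->
  (forall u v, ~~ ((g u < g v) && (g' u < g' v))) ->
  subseq c w -> subseq c w' -> pairwise (fun u v => line u == line v) c ->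
  size c <= (s.-1 + s.-1).+1.
Proof.
move=> w_runs w'_runs opp c_w c_w' c_pw.
apply: leq_trans (@size_le_descents _ (relpre g ltn) (relpre g' ltn) c opp) _.
by rewrite ltnS leq_add // (descents_on_line w_runs, descents_on_line w'_runs).
Qed.

(** * The four words *)

Lemma size_le_fibers (T : Type) (f : T -> nat) A B s :
  all (fun x => f x < A) s ->
  (forall a, a < A -> count (fun x => f x == a) s <= B) -> size s <= A * B.
Proof.
move=> s_lt fibers.
have <- : count (fun x => f x < A) s = size s by apply/eqP; rewrite -all_count.
elim: A fibers {s_lt} => [|A IH] fibers.
  by rewrite (eq_count (a2 := pred0)) ?count_pred0.
have -> : count (fun x => f x < A.+1) s =
          count (fun x => f x < A) s + count (fun x => f x == A) s.
  by elim: s {IH fibers} => //= x s ->; rewrite ltnS leq_eqVlt; case: eqP => /=; lia.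
by rewrite mulSn addnC leq_add ?fibers // IH // => a /ltnW /fibers.
Qed.

Lemma pairwise_common (T : eqType) (R R' : rel T) (w w' c : seq T) :
  pairwise R w -> pairwise R' w' -> subseq c w -> subseq c w' ->
  pairwise (fun u v => R u v && R' u v) c.
Proof.
move=> w_R w'_R c_w c_w'.
by rewrite pairwise_relI (subseq_pairwise c_w) ?(subseq_pairwise c_w').
Qed.

Lemma size_le_count_const (T : eqType) (c w : seq T) B :
  (forall v, count_mem v w <= B) -> pairwise eq_op c -> subseq c w -> size c <= B.
Proof.
case: c => [|u c] // w_count; rewrite pairwise_cons => /andP[/allP c_u _] c_w.
apply: leq_trans (w_count u); apply: leq_trans (leq_count_subseq _ c_w).
rewrite -[size _]count_predT; apply/eq_leq/eq_in_count => v.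
by rewrite inE => /orP[/eqP->|/c_u /eqP->]; rewrite /= eqxx.
Qed.

Lemma pairwise_fiber (T : eqType) (f : T -> nat) x (R R' : rel T) (c : seq T) :
  pairwise R c -> {in c &, forall u v, f u = x -> f v = x -> R u v -> R' u v} ->
  pairwise R' [seq v <- c | f v == x].
Proof.
move=> c_R R_R'; apply: (sub_in_pairwise (P := mem [seq v <- c | f v == x])).
- move=> u v; rewrite !mem_filter => /andP[/eqP fu u_in] /andP[/eqP fv v_in].
  exact: R_R'.
- exact/allP.
- exact: pairwise_filter.
Qed.

Lemma leq_mul_add_lex n x y x' y' : y < n -> y' < n ->
  (x * n + y <= x' * n + y') = (x < x') || (x == x') && (y <= y').
Proof.
move=> y_lt y'_lt; case: ltngtP => [lt_xx'|lt_x'x|->] /=; last by rewrite leq_add2l.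
- have : x.+1 * n <= x' * n by rewrite leq_mul2r lt_xx' orbT.
  rewrite mulSn; lia.
- have : x'.+1 * n <= x * n by rewrite leq_mul2r lt_x'x orbT.
  rewrite mulSn; lia.
Qed.

Lemma eqn_mul_add n x y x' y' : y < n -> y' < n ->
  (x * n + y == x' * n + y') = (x == x') && (y == y').
Proof.
move=> y_lt y'_lt; rewrite eqn_leq !leq_mul_add_lex //.
by case: ltngtP => //= _; rewrite eqn_leq.
Qed.

(* [(i, t)] stands for the [t]-th copy of the letter [i.+1]. *)
Definition occurrences s k := [seq (i, t) | i <- iota 0 k, t <- iota 0 s].

Lemma occurrencesP s k p : p \in occurrences s k -> p.1 < k /\ p.2 < s.
Proof. by case/allpairsP => [[i t] [/= + + ->]]; rewrite !mem_iota. Qed.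

Lemma uniq_occurrences s k : uniq (occurrences s k).
Proof.
apply: allpairs_uniq; [exact: iota_uniq | exact: iota_uniq |].
by move=> [i t] [j u] _ _ [-> ->].
Qed.

Lemma count_occurrences s k v :
  count (fun p : nat * nat => p.1.+1 == v) (occurrences s k) = (0 < v <= k) * s.
Proof.
elim: k => [|k IH]; first by rewrite /=; lia.
rewrite /occurrences -addn1 iotaD allpairs_cat count_cat IH /= cats0 count_map addn1.
have [<-|ne] := eqVneq k.+1 v.
  rewrite (eq_count (a2 := predT)) => [|t]; last by rewrite /= add0n eqxx.
  by rewrite count_predT size_iota ltnn leqnn /= mul1n.
rewrite (eq_count (a2 := pred0)) => [|t]; last by rewrite /= add0n (negbTE ne).
by rewrite count_pred0 addn0; congr (nat_of_bool _ * _); lia.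
Qed.

Section WordBy.
Variables (s k : nat) (key : nat * nat -> seqlexi nat).

Definition word_by : seq nat :=
  [seq p.1.+1 | p <- sort (fun p q => (key p <= key q)%O) (occurrences s k)].

Lemma size_word_by : size word_by = k * s.
Proof. by rewrite size_map size_sort size_allpairs !size_iota. Qed.

Lemma count_word_by v : count_mem v word_by = (0 < v <= k) * s.
Proof.
rewrite count_map -count_occurrences; apply/permP.
by rewrite perm_sort.
Qed.

Lemma multiperm_word_by : is_multiperm (nseq k s) word_by.
Proof.
split=> [|v]; rewrite size_nseq.
  by apply/allP => u /mapP[p]; rewrite mem_sort => /occurrencesP[p_lt _] ->.
move=> v_in; rewrite count_word_by nth_nseq.
have [-> ->] : (0 < v <= k) = true /\ v.-1 < k by lia.
by rewrite mul1n.
Qed.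

Lemma mem_word_by v : v \in word_by -> 0 < v <= k.
Proof. by case/mapP => p; rewrite mem_sort => /occurrencesP[p_lt _] ->. Qed.

Lemma pairwise_key_sort :
  pairwise (fun p q => (key p <= key q)%O && (p != q))
    (sort (fun p q => (key p <= key q)%O) (occurrences s k)).
Proof.
rewrite pairwise_relI -sorted_pairwise; last by move=> ? ? ?; apply: Order.le_trans.
rewrite sort_sorted -?uniq_pairwise ?sort_uniq ?uniq_occurrences //.
by move=> p q; apply: Order.le_total.
Qed.

Lemma pairwise_word_by (R : rel nat) :
  {in occurrences s k &, forall p q, (key p <= key q)%O -> R p.1.+1 q.1.+1} ->
  pairwise R word_by.
Proof.
move=> key_R; rewrite pairwise_map.
apply: (sub_in_pairwise (P := mem (occurrences s k))) pairwise_key_sort.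
  by move=> p q p_in q_in /andP[le_pq _]; apply: key_R.
by apply/allP => p; rewrite mem_sort.
Qed.

Lemma runs_word_by (line g : nat -> nat) :
  {in occurrences s k &, forall p q, p != q -> line p.1.+1 = line q.1.+1 ->
     (key p <= key q)%O -> (p.2 < q.2) || (p.2 == q.2) && (g p.1.+1 < g q.1.+1)} ->
  runs_on_lines s line g word_by.
Proof.
move=> key_lex L; rewrite filter_map descents_map.
apply: (@descents_lex _ snd).
  set ps := filter _ _.
  apply: pairwise_sorted.
  apply: (sub_in_pairwise (P := mem ps)) (pairwise_filter _ pairwise_key_sort).
    move=> p q; rewrite !mem_filter !mem_sort => /andP[/eqP p_L p_in] /andP[/eqP q_L q_in].
    by case/andP=> le_pq ne_pq; apply: key_lex; rewrite ?p_L ?q_L.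
  by apply/allP.
by apply/allP => p; rewrite mem_filter mem_sort => /andP[_ /occurrencesP[]].
Qed.

Lemma count_word_by_le v : count_mem v word_by <= s.
Proof. by rewrite count_word_by; case: (_ && _); rewrite ?mul1n. Qed.

End WordBy.

Definition flip (r : bool) n x := if r then n.-1 - x else x.

Lemma flip_lt r n x : x < n -> flip r n x < n.
Proof. by rewrite /flip; case: r => /=; lia. Qed.

Lemma flip_opposite r n x y : x < n -> y < n ->
  ~~ ((flip (~~ r) n x < flip (~~ r) n y) && (flip r n x < flip r n y)).
Proof. by rewrite /flip; case: r => /=; lia. Qed.

(* Letter [v] of {1, ..., k} has index [v.-1 = (block * b + row) * l + col]:
   the letters are cut into lines of length [l], grouped into blocks of [b] lines. *)
Section FourWords.
Variables (s k b l : nat).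
Hypotheses (b_gt0 : 0 < b) (l_gt0 : 0 < l).

Definition line v := v.-1 %/ l.
Definition col v := v.-1 %% l.
Definition block v := line v %/ b.
Definition row v := line v %% b.

Lemma block_le v : block v <= v.-1.
Proof. exact: leq_trans (leq_div _ _) (leq_div _ _). Qed.

Lemma col_lt v : col v < l. Proof. exact: ltn_pmod. Qed.
Lemma row_lt v : row v < b. Proof. exact: ltn_pmod. Qed.

Lemma leq_index u v :
  (u.-1 <= v.-1) = (line u < line v) || (line u == line v) && (col u <= col v).
Proof. by rewrite {1}(divn_eq u.-1 l) {1}(divn_eq v.-1 l) leq_mul_add_lex ?col_lt. Qed.

Lemma eq_index u v : (u.-1 == v.-1) = (line u == line v) && (col u == col v).
Proof. by rewrite {1}(divn_eq u.-1 l) {1}(divn_eq v.-1 l) eqn_mul_add ?col_lt. Qed.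

Lemma leq_line u v :
  (line u <= line v) = (block u < block v) || (block u == block v) && (row u <= row v).
Proof. by rewrite {1}(divn_eq (line u) b) {1}(divn_eq (line v) b) leq_mul_add_lex ?row_lt. Qed.

Lemma eq_line u v : (line u == line v) = (block u == block v) && (row u == row v).
Proof. by rewrite {1}(divn_eq (line u) b) {1}(divn_eq (line v) b) eqn_mul_add ?row_lt. Qed.

Lemma leq_line_index u v : u.-1 <= v.-1 -> line u <= line v.
Proof. exact: leq_div2r. Qed.

Lemma leq_index_same_line u v : line u = line v -> (u.-1 <= v.-1) = (col u <= col v).
Proof. by rewrite leq_index => ->; rewrite ltnn eqxx. Qed.

Lemma leq_line_same_block u v : block u = block v -> (line u <= line v) = (row u <= row v).
Proof. by rewrite leq_line => ->; rewrite ltnn eqxx. Qed.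

(* [scan_word false] is 1^s 2^s ... k^s and [scan_word true] reverses each of its
   blocks.  [rounds_word r] takes the blocks in decreasing order; inside a block it
   takes the lines by row, reversed when [r], and sweeps each line [s] times, along
   increasing columns when [r] and decreasing columns otherwise. *)
Definition scan_key r (p : nat * nat) : seqlexi nat :=
  [:: block p.1.+1; flip r k p.1; p.2].
Definition rounds_key r (p : nat * nat) : seqlexi nat :=
  [:: k - block p.1.+1; flip r b (row p.1.+1); p.2; flip (~~ r) l (col p.1.+1)].

Definition scan_word r := word_by s k (scan_key r).
Definition rounds_word r := word_by s k (rounds_key r).

Definition scan_order r u v :=
  (block u < block v) || (block u == block v) && (flip r k u.-1 <= flip r k v.-1).
Definition rounds_order r u v :=
  (block v < block u) || (block u == block v) && (flip r b (row u) <= flip r b (row v)).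

Lemma pairwise_scan r : pairwise (scan_order r) (scan_word r).
Proof.
apply: pairwise_word_by => -[i t] [j u] /occurrencesP[/= i_lt _] /occurrencesP[/= j_lt _].
by rewrite /scan_key /scan_order /flip !lexi_cons /= !leEnat; case: r; lia.
Qed.

Lemma pairwise_rounds r : pairwise (rounds_order r) (rounds_word r).
Proof.
apply: pairwise_word_by => -[i t] [j u] /occurrencesP[/= i_lt _] /occurrencesP[/= j_lt _].
have := block_le i.+1; have := block_le j.+1; have := row_lt i.+1; have := row_lt j.+1.
by rewrite /rounds_key /rounds_order /flip !lexi_cons /= !leEnat; case: r; lia.
Qed.

Lemma runs_rounds r : runs_on_lines s line (flip (~~ r) l \o col) (rounds_word r).
Proof.
apply: runs_word_by => -[i t] [j u] _ _; rewrite xpair_eqE => ne same_line.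
have /andP[/eqP same_block /eqP same_row] :
  (block i.+1 == block j.+1) && (row i.+1 == row j.+1) by rewrite -eq_line same_line.
have := eq_index i.+1 j.+1; rewrite /= same_line eqxx /= => eq_ij.
have := col_lt i.+1; have := col_lt j.+1.
rewrite /rounds_key same_block same_row /flip !lexi_cons /= !leEnat !leqnn /=.
by case: r => /=; lia.
Qed.

Lemma scan_scan_same_block r u v : 0 < u <= k -> 0 < v <= k ->
  scan_order r u v -> scan_order (~~ r) u v -> block u == block v -> u = v.
Proof. by rewrite /scan_order /flip; case: r => /=; lia. Qed.

Lemma scan_rounds_same_row r u v : 0 < u <= k -> 0 < v <= k ->
  scan_order r u v -> rounds_order r u v -> row u == row v ->
  (line u == line v) && (flip (~~ r) l (col v) <= flip (~~ r) l (col u)).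
Proof.
move=> u_in v_in scan_uv rounds_uv /eqP same_row.
have same_block : block u = block v.
  by move: scan_uv rounds_uv; rewrite /scan_order /rounds_order; lia.
have same_line : line u = line v by apply/eqP; rewrite eq_line same_block same_row !eqxx.
move: scan_uv {rounds_uv}; rewrite /scan_order same_block same_line ltnn !eqxx /=.
have := leq_index_same_line same_line; have := leq_index_same_line (esym same_line).
have := col_lt u; have := col_lt v.
by rewrite /flip; case: r => /=; lia.
Qed.

Lemma scan_rounds_opposite r u v : 0 < u <= k -> 0 < v <= k ->
  scan_order r u v -> rounds_order (~~ r) u v ->
  (line u == line v) && (flip r l (col u) <= flip r l (col v)).
Proof.
move=> u_in v_in scan_uv rounds_uv.
have same_block : block u = block v.
  by move: scan_uv rounds_uv; rewrite /scan_order /rounds_order; lia.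
move: scan_uv rounds_uv; rewrite /scan_order /rounds_order same_block ltnn eqxx /=.
move=> index_uv row_uv.
have same_line : line u = line v.
  have := leq_line_same_block same_block; have := leq_line_same_block (esym same_block).
  have := @leq_line_index u v; have := @leq_line_index v u.
  have := row_lt u; have := row_lt v.
  by move: index_uv row_uv; rewrite /flip; case: r => /=; lia.
rewrite same_line eqxx /=.
have := leq_index_same_line same_line; have := leq_index_same_line (esym same_line).
have := col_lt u; have := col_lt v.
by move: index_uv {row_uv}; rewrite /flip; case: r => /=; lia.
Qed.

Lemma rounds_rounds_same_block r u v :
  rounds_order r u v -> rounds_order (~~ r) u v -> block u == block v ->
  line u == line v.
Proof.
move=> + + /eqP same_block; rewrite /rounds_order same_block ltnn eqxx /=.
rewrite eq_line same_block eqxx /=.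
by have := row_lt u; have := row_lt v; rewrite /flip; case: r => /=; lia.
Qed.

Variable a : nat.
Hypotheses (s_gt0 : 0 < s) (k_le_abl : k <= a * b * l).

Lemma block_lt v : 0 < v <= k -> block v < a.
Proof. by move=> v_in; rewrite /block /line !ltn_divLR //; lia. Qed.

Lemma LCS_scan_scan r : LCS (scan_word r) (scan_word (~~ r)) <= a * s.
Proof.
apply: LCS_le_common => c c_w c_w'.
have c_pw := pairwise_common (pairwise_scan r) (pairwise_scan (~~ r)) c_w c_w'.
have c_in v : v \in c -> 0 < v <= k by move/(mem_subseq c_w)/mem_word_by.
apply: (size_le_fibers (f := block)) => [|B _]; first by apply/allP => v /c_in /block_lt.
rewrite -size_filter; apply: (size_le_count_const (count_word_by_le _ _ _)).
  apply: pairwise_fiber c_pw _ => u v /c_in u_in /c_in v_in bu bv /andP[uv uv'].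
  by apply/eqP/(scan_scan_same_block u_in v_in uv uv'); rewrite bu bv.
exact: subseq_trans (filter_subseq _ _) c_w.
Qed.

Lemma LCS_scan_rounds r : LCS (scan_word r) (rounds_word r) <= b * s.
Proof.
apply: LCS_le_common => c c_w c_w'.
have c_pw := pairwise_common (pairwise_scan r) (pairwise_rounds r) c_w c_w'.
have c_in v : v \in c -> 0 < v <= k by move/(mem_subseq c_w)/mem_word_by.
apply: (size_le_fibers (f := row)) => [|y _]; first by apply/allP => v _; apply: row_lt.
rewrite -size_filter; apply: (size_line_antitone (runs_rounds r)) => //.
  exact: subseq_trans (filter_subseq _ _) c_w'.
apply: pairwise_fiber c_pw _ => u v /c_in u_in /c_in v_in ru rv /andP[uv uv'].
by apply: scan_rounds_same_row; rewrite ?ru ?rv.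
Qed.

Lemma LCS_scan_rounds_opposite r : LCS (scan_word r) (rounds_word (~~ r)) <= s.-1 + l.
Proof.
apply: LCS_le_common => c c_w c_w'.
have c_pw := pairwise_common (pairwise_scan r) (pairwise_rounds (~~ r)) c_w c_w'.
have c_in v : v \in c -> 0 < v <= k by move/(mem_subseq c_w)/mem_word_by.
have := runs_rounds (~~ r); rewrite negbK => runs.
apply: (size_line_monotone runs) => //.
  by apply/allP => v _; apply/flip_lt/col_lt.
apply: (sub_in_pairwise (P := mem c) _ _ c_pw); last exact/allP.
by move=> u v /c_in u_in /c_in v_in /andP[]; apply: scan_rounds_opposite.
Qed.

Lemma LCS_rounds_rounds r :
  LCS (rounds_word r) (rounds_word (~~ r)) <= a * (s.-1 + s.-1).+1.
Proof.
apply: LCS_le_common => c c_w c_w'.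
have c_pw := pairwise_common (pairwise_rounds r) (pairwise_rounds (~~ r)) c_w c_w'.
have c_in v : v \in c -> 0 < v <= k by move/(mem_subseq c_w)/mem_word_by.
apply: (size_le_fibers (f := block)) => [|B _]; first by apply/allP => v /c_in /block_lt.
have := runs_rounds (~~ r); rewrite negbK => runs'.
rewrite -size_filter; apply: (size_line_opposite (runs_rounds r) runs').
- by move=> u v; apply: flip_opposite; apply: col_lt.
- exact: subseq_trans (filter_subseq _ _) c_w.
- exact: subseq_trans (filter_subseq _ _) c_w'.
apply: pairwise_fiber c_pw _ => u v _ _ bu bv /andP[uv uv'].
by apply: rounds_rounds_same_block uv uv' _; rewrite bu bv.
Qed.

Definition four_words :=
  [:: scan_word false; scan_word true; rounds_word false; rounds_word true].

Lemma four_words_spec T :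
  a * (s.-1 + s.-1).+1 <= T -> b * s <= T -> s.-1 + l <= T -> T < k * s ->
  [/\ size four_words = 4, uniq four_words,
      {in four_words, forall w, is_multiperm (nseq k s) w}
    & {in four_words &, forall w w', w != w' -> LCS w w' <= T}].
Proof.
move=> a_le b_le l_le T_lt.
have as_le : a * s <= T by apply: leq_trans a_le; rewrite leq_mul2l; lia.
have W_pairs : pairwise (fun w w' => LCS w w' <= T) four_words.
  have := LCS_scan_scan false; have := LCS_scan_rounds false.
  have := LCS_scan_rounds_opposite false; have := LCS_scan_rounds_opposite true.
  have := LCS_scan_rounds true; have := LCS_rounds_rounds false.
  by rewrite /=; lia.
have W_sizes : all (fun w => T < size w) four_words.
  by rewrite /= /scan_word /rounds_word !size_word_by T_lt.
have [W_uniq W_LCS] := uniq_LCS_pairwise W_pairs W_sizes.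
split=> // w; rewrite !inE => /or4P[] /eqP->; apply: multiperm_word_by.
Qed.

End FourWords.

(** * Choice of the parameters *)

Lemma exists_icbrt N : exists m, m * m * m <= N < m.+1 * m.+1 * m.+1.
Proof.
elim: N => [|N [m /andP[m_le N_lt]]]; first by exists 0.
have [m1_le|N_lt'] := leqP (m.+1 * m.+1 * m.+1) N.+1.
  by exists m.+1; rewrite m1_le /=; nia.
by exists m; rewrite N_lt' andbT; lia.
Qed.

(* With [u = q - 2s + 1] and [v = q - s], the difference of the two sides is
   [M^2 (u + 2v) + M v (2u + v) + u v^2]; only [u v^2] may be negative, and
   [3u >= 1 - s], [v <= M] make the first term absorb it. *)
Lemma cube_le_shiftZ (M s q : Z) : (1 <= s -> 5 * s - 2 <= 3 * q <= 5 * s -> 2 * s + 1 <= M ->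
  M * M * M <= (M + q - 2 * s + 1) * (M + q - s) * (M + q - s))%Z.
Proof.
move=> s_ge1 q_bounds M_ge.
have p1 : (0 <= M * M * (3 * q - 5 * s + 2))%Z by apply: Z.mul_nonneg_nonneg; nia.
have p2 : (0 <= M * ((q - s) * (3 * q - 5 * s + 2)))%Z.
  by apply: Z.mul_nonneg_nonneg; [|apply: Z.mul_nonneg_nonneg]; lia.
have p3 : (0 <= (3 * q - 5 * s + 2) * ((q - s) * (q - s)))%Z.
  by apply: Z.mul_nonneg_nonneg; nia.
have p4 : (0 <= (s - 1) * (M * M - (q - s) * (q - s)))%Z by apply: Z.mul_nonneg_nonneg; nia.
nia.
Qed.

Lemma cube_le_shift m s q : 0 < s -> 5 * s <= 3 * q + 2 -> 3 * q <= 5 * s -> 2 * s <= m ->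
  m.+1 * m.+1 * m.+1 <= (m + q + 2 - 2 * s) * (m + q + 1 - s) * (m + q + 1 - s).
Proof.
move=> s_gt0 q_ge q_le m_ge.
have := @cube_le_shiftZ (Z.of_nat m.+1) (Z.of_nat s) (Z.of_nat q); lia.
Qed.

Lemma icbrt_ge s k m : 0 < s -> 5 * s <= k -> 2 * s * s * k < m.+1 * m.+1 * m.+1 -> 2 * s <= m.
Proof.
move=> s_gt0 k_ge m_gt; rewrite leqNgt; apply/negP => m_lt.
have : m.+1 * m.+1 * m.+1 <= (2 * s) * (2 * s) * (2 * s) by rewrite !leq_mul.
have : 2 * s * s * (5 * s) <= 2 * s * s * k by rewrite leq_mul2l k_ge orbT.
nia.
Qed.

Lemma icbrt_add_lt s k m q : 0 < s -> 5 * s <= k -> m * m * m <= 2 * s * s * k ->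
  3 * q <= 5 * s -> m + q < k * s.
Proof.
move=> s_gt0 k_ge m_le q_le; rewrite ltnNge; apply/negP => ks_le.
have k2_le : s * (k - 2) <= m by lia.
have : (s * (k - 2)) * (s * (k - 2)) * (s * (k - 2)) <= m * m * m by rewrite !leq_mul.
have : s * s * (s * 3 * 3) <= s * s * (s * (k - 2) * (k - 2)) by rewrite !leq_mul //; lia.
nia.
Qed.

Lemma exists_parameters s k m q : 0 < s -> 5 * s <= k ->
  m * m * m <= 2 * s * s * k < m.+1 * m.+1 * m.+1 -> 5 * s <= 3 * q + 2 -> 3 * q <= 5 * s ->
  exists a b l, [/\ 0 < b, 0 < l, k <= a * b * l &
    [/\ a * (s.-1 + s.-1).+1 <= m + q, b * s <= m + q, s.-1 + l <= m + q & m + q < k * s]].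
Proof.
move=> s_gt0 k_ge /andP[m_le m_gt] q_ge q_le.
have m_ge := icbrt_ge s_gt0 k_ge m_gt.
set T := m + q; set d := (s.-1 + s.-1).+1.
exists (T %/ d), (T %/ s), (T - s.-1); split; last split.
- by rewrite divn_gt0 //; lia.
- lia.
- have U_le : m + q + 2 - 2 * s <= T %/ d * d.
    by have := ltn_ceil T (isT : 0 < d); rewrite /T /d; lia.
  have V_le : m + q + 1 - s <= T %/ s * s.
    by have := ltn_ceil T s_gt0; rewrite /T; lia.
  set a := T %/ d; set b := T %/ s; set l := T - s.-1.
  (* s d k <= 2 s^2 k < (m+1)^3 <= (T + 2 - 2s) (T + 1 - s)^2 <= (a d) (b s) l *)
  have sd_le : s * d <= 2 * s * s by rewrite [2 * s * s]mulnC leq_mul2l; lia.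
  have cube_le : m.+1 * m.+1 * m.+1 <= a * d * (b * s) * l.
    apply: leq_trans (cube_le_shift s_gt0 q_ge q_le m_ge) _.
    by rewrite !leq_mul // /l /T; lia.
  have : s * d * k < s * d * (a * b * l).
    apply: leq_ltn_trans (leq_mul sd_le (leqnn k)) (leq_trans m_gt _).
    by apply: leq_trans cube_le (eq_leq _); lia.
  by rewrite ltn_pmul2l ?muln_gt0 ?s_gt0 // => /ltnW.
- exact: leq_divM.
- exact: leq_divM.
- lia.
- exact: icbrt_add_lt.
Qed.

Lemma INR_le_cbrt m (x : R) : (INR m ^ 3 <= x)%R -> (INR m <= Rpower x (1 / 3))%R.
Proof.
move=> m_le; case: (posnP m) => [->|m_gt0]; first exact/Rlt_le/exp_pos.
have m_pos : (0 < INR m)%R by apply: lt_0_INR; apply/ltP.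
have -> : INR m = Rpower (INR m ^ 3) (1 / 3).
  rewrite -(@Rpower_pow 3 _ m_pos) Rpower_mult.
  have -> : (INR 3 * (1 / 3) = 1)%R by rewrite /=; field.
  by rewrite Rpower_1.
by apply: Rle_Rpower_l; [lra | split; first exact: pow_lt].
Qed.

Lemma INR_le_bound s k m q : m * m * m <= 2 * s * s * k -> 3 * q <= 5 * s ->
  (INR (m + q) <= Rpower (2 * INR s ^ 2 * INR k) (1 / 3) + 5 / 3 * INR s
                  + Rpower (INR s) (4 / 3) * Rpower (INR k) (- (1 / 3)))%R.
Proof.
rewrite -!multE -plusE => /leP/le_INR m_le /leP/le_INR q_le.
have last_ge0 : (0 <= Rpower (INR s) (4 / 3) * Rpower (INR k) (- (1 / 3)))%R.
  by apply: Rmult_le_pos; apply/Rlt_le/exp_pos.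
have m_cbrt : (INR m <= Rpower (2 * INR s ^ 2 * INR k) (1 / 3))%R.
  by apply: INR_le_cbrt; move: m_le; rewrite !mult_INR /=; lra.
rewrite !mult_INR /= in q_le; rewrite plus_INR; lra.
Qed.

Theorem theorem12 (s k : nat) (hs : (0 < s)%N) (hk : (0 < k)%N)
    (hsk : (5 * s <= k)%N) :
  exists W : seq (seq nat),
    size W = 4%N /\ uniq W /\
    (forall w, w \in W -> is_multiperm (nseq k s) w) /\
    (forall w w', w \in W -> w' \in W -> w <> w' ->
       (INR (LCS w w') <=
          Rpower (2 * INR s ^ 2 * INR k) (1 / 3)
          + 5 / 3 * INR s
          + Rpower (INR s) (4 / 3) * Rpower (INR k) (- (1 / 3)))%R).
Proof.
have [m m_bounds] := exists_icbrt (2 * s * s * k).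
set q := (5 * s) %/ 3.
have q_le : 3 * q <= 5 * s by rewrite mulnC leq_divM.
have q_ge : 5 * s <= 3 * q + 2 by have := ltn_ceil (5 * s) (isT : 0 < 3); lia.
have [a [b [l [b_gt0 l_gt0 k_le [a_le b_le l_le T_lt]]]]] :=
  exists_parameters hs hsk m_bounds q_ge q_le.
have [W_size W_uniq W_perm W_LCS] := four_words_spec b_gt0 l_gt0 hs k_le a_le b_le l_le T_lt.
exists (four_words s k b l); do 3!split=> //.
move=> w w' w_in w'_in /eqP w_ne.
apply: Rle_trans (INR_le_bound (proj1 (andP m_bounds)) q_le).
exact/le_INR/leP/W_LCS.
Qed.
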